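(* Let $s\ge 0$ and $n\ge 0$. The $R/\mathfrak{h}_s$-module $\mathcal{P}_{s,n}$ admits a filtration by $R/\mathfrak{h}_s$-submodules $0=F_0\subset F_1\subset\cdots\subset F_{(s+1)^n}=\mathcal{P}_{s,n}$ such that $F_i/F_{i-1}\cong \mathcal{Q}_{s,n}$ for each $1\le i\le (s+1)^n$.
   Context: Let $k$ be a field. Let $\mathfrak{S}=\bigcup_{n\ge1}\mathfrak{S}_n$ be the group of finitary permutations of $\{1,2,\dots\}$ and $\mathfrak{S}(n)$ the subgroup fixing $1,\dots,n$; a representation of $\mathfrak{S}$ is smooth if every vector is fixed by some $\mathfrak{S}(n)$. Let $R=k[x_1,x_2,\dots]$ with $\mathfrak{S}$ permuting the variables, and $\mathfrak{h}_s$ the ideal generated by all $x_i^{s+1}$. An $R/\mathfrak{h}_s$-module means a module over $R/\mathfrak{h}_s$ equipped with a smooth $\mathfrak{S}$-action compatible with the action on $R/\mathfrak{h}_s$ ($\sigma(am)=\sigma(a)\sigma(m)$); submodules and isomorphisms are required to be $\mathfrak{S}$-equivariant. $\mathcal{P}_{s,n}$ is the free $R/\mathfrak{h}_s$-module with basis $e_{i_1,\dots,i_n}$ indexed by $n$-tuples of distinct positive integers, with $\sigma e_{i_1,\dots,i_n}=e_{\sigma(i_1),\dots,\sigma(i_n)}$. $\mathcal{Q}_{s,n}$ is the quotient of $\mathcal{P}_{s,n}$ by the submodule generated by all $x_i e_{i_1,\dots,i_n}$ with $i\in\{i_1,\dots,i_n\}$. *)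

From mathcomp Require Import all_boot all_algebra.
From Stdlib Require Import ClassicalEpsilon.
Set Implicit Arguments.
Unset Strict Implicit.
Unset Printing Implicit Defensive.
Import GRing.Theory.
Local Open Scope ring_scope.

(* Variables are x_0, x_1, ... (0-based relabelling of x_1, x_2, ...).
   A monomial is an exponent function nat -> nat. *)
Definition mono := nat -> nat.
Definition mono0 : mono := fun _ => 0%N.

(* A monomial is nonzero in R/h_s iff all exponents are <= s
   (and it has finite support). *)
Definition valid_mono (s : nat) (m : mono) : Prop :=
  (forall i, (m i <= s)%N) /\ exists N, forall i, (N <= i)%N -> m i = 0%N.

Definition valid_tuple (n : nat) (I : seq nat) : Prop := size I = n /\ uniq I.

(* Coefficient vectors w.r.t. the k-basis x^m e_I of P_{s,n}. *)
Definition elt (k : fieldType) := mono -> seq nat -> k.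

Definition isP (k : fieldType) (s n : nat) (f : elt k) : Prop :=
  (forall m I, f m I <> 0 -> valid_mono s m /\ valid_tuple n I) /\
  exists l : list (mono * seq nat), forall m I, f m I <> 0 -> List.In (m, I) l.

Definition ezero (k : fieldType) : elt k := fun _ _ => 0.
Definition eadd (k : fieldType) (f g : elt k) : elt k := fun m I => f m I + g m I.
Definition esub (k : fieldType) (f g : elt k) : elt k := fun m I => f m I - g m I.
Definition escale (k : fieldType) (c : k) (f : elt k) : elt k := fun m I => c * f m I.

(* Multiplication by the variable x_i in R/h_s (x_i^{s+1} = 0). *)
Definition emulx (k : fieldType) (s i : nat) (f : elt k) : elt k :=
  fun m I => if (0 < m i <= s)%N
             then f (fun j => if j == i then (m j).-1 else m j) I else 0.

Record finperm := FinPerm {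
  pfun : nat -> nat;
  pinv : nat -> nat;
  pfunK : cancel pfun pinv;
  pinvK : cancel pinv pfun;
  pfin : exists N, forall i, (N <= i)%N -> pfun i = i }.

(* Action: sigma (x^m e_I) = x^{sigma m} e_{sigma I}. *)
Definition eact (k : fieldType) (sg : finperm) (f : elt k) : elt k :=
  fun m I => f (m \o pfun sg) (map (pinv sg) I).

Definition ebasis (k : fieldType) (I : seq nat) : elt k :=
  fun m J => if excluded_middle_informative (m = mono0 /\ J = I) then 1 else 0.

(* R/h_s-submodules of P_{s,n} (stable under the S-action). Closure under the
   ring R/h_s is expressed via its k-algebra generators x_i. *)
Definition is_submodule (k : fieldType) (s n : nat) (F : elt k -> Prop) : Prop :=
  (forall x, F x -> isP s n x) /\
  F (ezero k) /\
  (forall x y, F x -> F y -> F (eadd x y)) /\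
  (forall c x, F x -> F (escale c x)) /\
  (forall i x, F x -> F (emulx s i x)) /\
  (forall sg x, F x -> F (eact sg x)).

(* The submodule N of P_{s,n} generated by x_i e_I with i in I;
   Q_{s,n} := P_{s,n} / N. *)
Definition inN (k : fieldType) (s n : nat) (x : elt k) : Prop :=
  forall F : elt k -> Prop, is_submodule s n F ->
    (forall i I, valid_tuple n I -> i \in I -> F (emulx s i (ebasis k I))) ->
    F x.

(* G/H is isomorphic to Q_{s,n} = P_{s,n}/N as R/h_s-modules: there is a map
   phi from G to P_{s,n} (a set-theoretic lift of a map G -> P/N) which is
   k-linear, x_i-linear and S-equivariant modulo N, whose induced map
   G -> P/N is surjective with kernel exactly H. *)
Definition quot_iso_Q (k : fieldType) (s n : nat) (G H : elt k -> Prop) : Prop :=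
  exists phi : elt k -> elt k,
    (forall x, G x -> isP s n (phi x)) /\
    (forall x y, G x -> G y ->
       inN s n (esub (phi (eadd x y)) (eadd (phi x) (phi y)))) /\
    (forall c x, G x -> inN s n (esub (phi (escale c x)) (escale c (phi x)))) /\
    (forall i x, G x -> inN s n (esub (phi (emulx s i x)) (emulx s i (phi x)))) /\
    (forall sg x, G x -> inN s n (esub (phi (eact sg x)) (eact sg (phi x)))) /\
    (forall x, G x -> (inN s n (phi x) <-> H x)) /\
    (forall y, isP s n y -> exists x, G x /\ inN s n (esub (phi x) y)).

(* Write a basis vector of P_{s,n} as x^m e_I with I = (i_1, ..., i_n). The
   exponents m(i_1), ..., m(i_n) lie in [0, s], so they are the base-(s+1)
   digits of a code c(m, I) < (s+1)^n. Multiplying by a variable never lowers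
   the code and permuting the variables preserves it, so the spans F_i of the
   basis vectors of code at least (s+1)^n - i form a filtration by submodules.
   The submodule N with Q_{s,n} = P_{s,n}/N is spanned by the x^m e_I with m
   not vanishing on I. Hence, for c = (s+1)^n - i, removing the digits of c
   from the exponents on I, x^m e_I |-> x^(m - digits c I) e_I, induces an
   isomorphism F_i/F_{i-1} -> Q_{s,n}. *)

From mathcomp Require Import all_boot all_algebra.
From Stdlib Require Import Classical ClassicalEpsilon FunctionalExtensionality.
Set Implicit Arguments.
Unset Strict Implicit.
Unset Printing Implicit Defensive.
Import GRing.Theory.
Local Open Scope ring_scope.

Section Monomials.
Variable s : nat.
Implicit Types (m : mono) (I : seq nat) (sg : finperm).

Definition dec i m : mono := fun j => if j == i then (m j).-1 else m j.
Definition inc i m : mono := fun j => if j == i then (m j).+1 else m j.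

Lemma inc_dec i m : (0 < m i)%N -> inc i (dec i m) = m.
Proof.
move=> mi; apply: functional_extensionality => j; rewrite /inc /dec.
by case: eqP => [->|]; rewrite ?eqxx ?prednK.
Qed.

Lemma dec_le i m j : (dec i m j <= m j)%N.
Proof. by rewrite /dec; case: eqP => // _; apply: leq_pred. Qed.

Lemma valid_mono_dec i m : (m i <= s)%N -> valid_mono s (dec i m) -> valid_mono s m.
Proof.
move=> mi [le_s [N supN]]; split=> [j|].
  by case: (eqVneq j i) => [->//|ji]; have := le_s j; rewrite /dec (negbTE ji).
exists (maxn N i.+1) => j; rewrite geq_max => /andP[Nj ij].
by have := supN j Nj; rewrite /dec; case: eqP => // ji; rewrite ji ltnn in ij.
Qed.

Lemma sum_dec_ltn N j m : (j < N)%N -> (0 < m j)%N ->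
  (\sum_(i < N) dec j m i < \sum_(i < N) m i)%N.
Proof.
move=> jN mj; rewrite [X in (_ < X)%N](bigD1 (Ordinal jN)) //= (bigD1 (Ordinal jN)) //=.
rewrite {1}/dec eqxx -addSn prednK // leq_add2l; apply/eq_leq/eq_bigr => i /eqP ij.
by rewrite /dec; case: eqP => // e; case: ij; apply: val_inj.
Qed.

Definition madd (m1 m2 : mono) : mono := fun j => (m1 j + m2 j)%N.
Definition zero_on m I : mono := fun j => if j \in I then 0%N else m j.

Lemma madd_dec j m1 m2 : (0 < m1 j)%N -> madd (dec j m1) m2 = dec j (madd m1 m2).
Proof.
move=> m1j; apply: functional_extensionality => t; rewrite /madd /dec.
by case: eqP => // ->; rewrite -subn1 addnBAC // subn1.
Qed.

Lemma valid_mono_maddl m m' : valid_mono s (madd m m') -> valid_mono s m.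
Proof.
move=> [le_s [N supN]]; split=> [j|]; first exact: leq_trans (leq_addr _ _) (le_s j).
by exists N => j /supN /eqP; rewrite addn_eq0 => /andP[/eqP].
Qed.

Definition vanish_on m I := all (fun j => m j == 0%N) I.

Lemma vanish_onP m I : reflect (forall j, j \in I -> m j = 0%N) (vanish_on m I).
Proof. by apply: (iffP allP) => h j jI; [apply/eqP; apply: h | rewrite h]. Qed.

Lemma vanish_on_act sg m I : vanish_on (m \o pfun sg) (map (pinv sg) I) = vanish_on m I.
Proof. by rewrite /vanish_on all_map; apply: eq_all => j /=; rewrite pinvK. Qed.

Lemma vanish_on_zero_on m I : vanish_on (zero_on m I) I.
Proof. by apply/vanish_onP => j jI; rewrite /zero_on jI. Qed.

Fixpoint code m I : nat := if I is j :: I' then (m j + s.+1 * code m I')%N else 0%N.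

Fixpoint digits (c : nat) I : mono :=
  if I is j :: I' then fun t => if t == j then (c %% s.+1)%N else digits (c %/ s.+1) I' t
  else mono0.

Lemma eq_code m1 m2 I : {in I, m1 =1 m2} -> code m1 I = code m2 I.
Proof.
elim: I => //= j I IH m12; rewrite m12 ?mem_head // IH // => i iI.
by apply: m12; rewrite inE iI orbT.
Qed.

Lemma leq_code m1 m2 I : (forall j, m1 j <= m2 j)%N -> (code m1 I <= code m2 I)%N.
Proof. by move=> m12; elim: I => //= j I IH; rewrite leq_add ?leq_mul2l ?IH ?orbT. Qed.

Lemma code_ltn m I : (forall j, m j <= s)%N -> (code m I < s.+1 ^ size I)%N.
Proof.
move=> le_s; elim: I => [|j I IH] /=; first by rewrite expn0.
by rewrite expnS (leq_trans _ (leq_mul (leqnn s.+1) IH)) // mulnS ltn_add2r ltnS.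
Qed.

Lemma code_dec_ltn i m I : i \in I -> (0 < m i)%N -> (code (dec i m) I < code m I)%N.
Proof.
move=> + mi; elim: I => //= j I IH; rewrite inE => /orP[/eqP<-|iI].
  rewrite {1}/dec eqxx -addSn prednK // leq_add // leq_mul2l.
  by rewrite (leq_code I (dec_le i m)) orbT.
by rewrite -addnS leq_add ?dec_le // ltn_pmul2l ?IH.
Qed.

Lemma digits_notin c I j : j \notin I -> digits c I j = 0%N.
Proof.
elim: I c => //= i I IH c; rewrite inE negb_or => /andP[ji jI].
by rewrite (negbTE ji) IH.
Qed.

Lemma digits_le c I j : (digits c I j <= s)%N.
Proof. by elim: I c => //= i I IH c; case: ifP => _; rewrite // -ltnS ltn_mod. Qed.

Lemma code_digits c I : uniq I -> (c < s.+1 ^ size I)%N -> code (digits c I) I = c.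
Proof.
elim: I c => [|i I IH] c /=; first by rewrite expn0 ltnS leqn0 => _ /eqP.
move=> /andP[iI uI] c_lt; rewrite eqxx (@eq_code _ (digits (c %/ s.+1) I)); last first.
  by move=> j jI; case: eqP => // ji; rewrite -ji jI in iI.
rewrite IH //; first by rewrite addnC mulnC -divn_eq.
by rewrite ltn_divLR // -expnSr.
Qed.

Lemma digits_code m I : uniq I -> (forall j, m j <= s)%N ->
  {in I, m =1 digits (code m I) I}.
Proof.
move=> + le_s; elim: I => //= i I IH /andP[iI uI] j; rewrite inE.
rewrite addnC mulnC modnMDl modn_small ?ltnS ?le_s // divnMDl // divn_small ?ltnS ?le_s //.
by case: eqP => [->|_ /= jI]; last by rewrite addn0 IH.
Qed.

Lemma digits_act sg c I : digits c (map (pinv sg) I) = digits c I \o pfun sg.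
Proof.
apply: functional_extensionality => t; elim: I c => //= i I IH c; rewrite IH.
by congr (if _ then _ else _); apply/eqP/eqP => [->|<-]; rewrite ?pinvK ?pfunK.
Qed.

Lemma code_act sg m I : code (m \o pfun sg) (map (pinv sg) I) = code m I.
Proof. by elim: I => //= i I ->; rewrite pinvK. Qed.

Lemma madd_zero_on_digits m I : uniq I -> (forall j, m j <= s)%N ->
  madd (zero_on m I) (digits (code m I) I) = m.
Proof.
move=> uI le_s; apply: functional_extensionality => j; rewrite /madd /zero_on.
case: ifP => jI; first by rewrite add0n -(digits_code uI le_s jI).
by rewrite digits_notin ?jI // addn0.
Qed.

Lemma zero_on_madd_digits m I c : vanish_on m I -> zero_on (madd m (digits c I)) I = m.
Proof.
move=> /vanish_onP v; apply: functional_extensionality => j; rewrite /zero_on /madd.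
case: ifP => jI; first by rewrite v.
by rewrite digits_notin ?jI // addn0.
Qed.

Lemma code_madd_digits m I c : uniq I -> (c < s.+1 ^ size I)%N -> vanish_on m I ->
  code (madd m (digits c I)) I = c.
Proof.
move=> uI c_lt /vanish_onP v; rewrite -[RHS](code_digits uI c_lt).
by apply: eq_code => j /v; rewrite /madd => ->.
Qed.

Lemma valid_mono_madd_digits m I c : vanish_on m I -> valid_mono s m ->
  valid_mono s (madd m (digits c I)).
Proof.
move=> /vanish_onP v [le_s [N supN]]; split=> [j|].
  rewrite /madd; case: (boolP (j \in I)) => jI; first by rewrite v // add0n digits_le.
  by rewrite digits_notin // addn0.
exists (maxn N (\max_(i <- I) i.+1)) => j; rewrite geq_max => /andP[Nj Ij].
rewrite /madd supN // digits_notin //; apply/negP => jI.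
by have := leq_trans (@leq_bigmax_seq _ I predT succn j jI isT) Ij; rewrite ltnn.
Qed.

End Monomials.

Section PModule.
Variable k : fieldType.
Variables s n : nat.
Implicit Types (f g x y : elt k) (m : mono) (I : seq nat) (sg : finperm).

Lemma elt_ext f g : (forall m I, f m I = g m I) -> f = g.
Proof.
by move=> fg; apply: functional_extensionality => m; apply: functional_extensionality.
Qed.

Lemma esubrr f : esub f f = ezero k.
Proof. by apply: elt_ext => m I; rewrite /esub subrr. Qed.

Lemma map2_neq0 (op : k -> k -> k) a b : op 0 0 = 0 -> op a b <> 0 -> a <> 0 \/ b <> 0.
Proof.
move=> op00 nz; apply: NNPP => /not_or_and[/NNPP a0 /NNPP b0].
by apply: nz; rewrite a0 b0.
Qed.

Lemma isP_map2 (op : k -> k -> k) f g : op 0 0 = 0 ->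
  isP s n f -> isP s n g -> isP s n (fun m I => op (f m I) (g m I)).
Proof.
move=> op00 [f_valid [lf lfP]] [g_valid [lg lgP]].
split=> [m I /(map2_neq0 op00)[/f_valid|/g_valid] //|].
exists (lf ++ lg) => m I /(map2_neq0 op00)[/lfP|/lgP] ?.
  by apply: List.in_or_app; left.
by apply: List.in_or_app; right.
Qed.

Lemma isP0 : isP s n (ezero k).
Proof. by split=> [m I|]; [case | exists nil => m I []]. Qed.

Lemma isP_sub f g : isP s n f -> isP s n g -> isP s n (esub f g).
Proof. exact: (isP_map2 (op := fun a b => a - b) (subrr 0)). Qed.

Lemma isP_mulx i f : isP s n f -> isP s n (emulx s i f).
Proof.
move=> [f_valid [l lP]]; split=> [m I|].
  rewrite /emulx -/(dec i m); case: ifP => // /andP[_ mi] /f_valid[??].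
  by split=> //; apply: valid_mono_dec mi _.
exists (List.map (fun p => (inc i p.1, p.2)) l) => m I.
rewrite /emulx -/(dec i m); case: ifP => // /andP[mi _] /lP.
by move/(List.in_map (fun p => (inc i p.1, p.2))); rewrite /= inc_dec.
Qed.

Lemma isP_act sg f : isP s n f -> isP s n (eact sg f).
Proof.
move=> [f_valid [l lP]]; split=> [m I /f_valid[[le_s [N supN]] [size_I uniq_I]]|].
  split; split.
  - by move=> j; have := le_s (pinv sg j); rewrite /= pinvK.
  - have [M fixM] := pfin sg; exists (maxn N M) => j; rewrite geq_max => /andP[Nj Mj].
    by have := supN j Nj; rewrite /= fixM.
  - by rewrite -size_I size_map.
  - by rewrite (map_inj_uniq (can_inj (pinvK sg))) in uniq_I.
exists (List.map (fun p => (p.1 \o pinv sg, map (pfun sg) p.2)) l) => m I /lP.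
move/(List.in_map (fun p => (p.1 \o pinv sg, map (pfun sg) p.2))) => /=.
rewrite -map_comp map_id_in => [|j _]; last by rewrite /= pinvK.
suff -> : (m \o pfun sg) \o pinv sg = m by [].
by apply: functional_extensionality => j /=; rewrite pinvK.
Qed.

Definition supported_in (Q : mono -> seq nat -> Prop) x :=
  isP s n x /\ forall m I, x m I <> 0 -> Q m I.

Lemma supported_in_map2 Q (op : k -> k -> k) f g : op 0 0 = 0 ->
  supported_in Q f -> supported_in Q g ->
  supported_in Q (fun m I => op (f m I) (g m I)).
Proof.
move=> op00 [Pf fQ] [Pg gQ]; split; first exact: isP_map2.
by move=> m I /(map2_neq0 op00)[/fQ|/gQ].
Qed.

Lemma is_submodule_supported Q :
  (forall i m I, (0 < m i)%N -> Q (dec i m) I -> Q m I) ->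
  (forall sg m I, Q (m \o pfun sg) (map (pinv sg) I) -> Q m I) ->
  is_submodule s n (supported_in Q).
Proof.
move=> Q_mulx Q_act; split; first by move=> x [].
split; first by split=> [|m I []]; first exact: isP0.
split; first by move=> x y; apply: (supported_in_map2 (op := +%R) (addr0 0)).
split.
  by move=> c x Qx; apply: (supported_in_map2 (op := fun a _ => c * a) (mulr0 c) Qx Qx).
split=> [i x [Px xQ]|sg x [Px xQ]]; split; [exact: isP_mulx | | exact: isP_act |].
  move=> m I; rewrite /emulx -/(dec i m).
  by case: ifP => // /andP[mi _] /xQ; apply: Q_mulx.
by move=> m I /xQ; apply: Q_act.
Qed.

Definition esingle m I (c : k) : elt k :=
  fun m' J => if excluded_middle_informative (m' = m /\ J = I) then c else 0.

Lemma isP_esingle m I c : valid_mono s m -> valid_tuple n I -> isP s n (esingle m I c).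
Proof.
move=> vm vI; split=> [m' J|]; rewrite /esingle.
  by case: excluded_middle_informative => //= -[-> ->].
by exists [:: (m, I)] => m' J; case: excluded_middle_informative => //= -[-> ->]; left.
Qed.

Lemma esingle_scale m I c : esingle m I c = escale c (esingle m I 1).
Proof.
apply: elt_ext => m' J; rewrite /escale /esingle.
by case: excluded_middle_informative => /= _; rewrite ?mulr1 ?mulr0.
Qed.

Lemma emulx_esingle j m I : (0 < m j <= s)%N ->
  emulx s j (esingle (dec j m) I 1) = esingle m I 1.
Proof.
move=> /andP[mj0 mjs]; apply: elt_ext => m' J; rewrite /emulx -/(dec j m') /esingle.
case: (excluded_middle_informative (m' = m /\ J = I)) => [/= [-> ->]|ne /=].
  by rewrite mj0 mjs; case: excluded_middle_informative => //= no; exfalso; apply: no.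
case: ifP => // /andP[m'j _]; case: excluded_middle_informative => //= -[e eJ].
by case: ne; split=> //; rewrite -(inc_dec m'j) e inc_dec.
Qed.

Lemma supported_in_span (F : elt k -> Prop) Q :
  F (ezero k) -> (forall x y, F x -> F y -> F (eadd x y)) ->
  (forall m I c, valid_mono s m -> valid_tuple n I -> Q m I -> F (esingle m I c)) ->
  forall x, supported_in Q x -> F x.
Proof.
move=> F0 FD Fsingle x [[x_valid [l lP]] xQ].
elim: l x x_valid lP xQ => [|[pm pI] l IH] x x_valid lP xQ.
  by suff -> : x = ezero k by []; apply: elt_ext => m I; apply: NNPP => /lP.
have [x_p0|x_pn0] := eqVneq (x pm pI) 0.
  apply: IH => // m I nz; case: (lP m I nz) => // -[em eI].
  by move: nz; rewrite -em -eI x_p0.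
pose x' := fun m I => if excluded_middle_informative (m = pm /\ I = pI) then 0 else x m I.
have nz' m I : x' m I <> 0 -> x m I <> 0 /\ ~ (m = pm /\ I = pI).
  by rewrite /x'; case: excluded_middle_informative.
have -> : x = eadd x' (esingle pm pI (x pm pI)).
  apply: elt_ext => m I; rewrite /eadd /x' /esingle.
  by case: excluded_middle_informative => [/= [-> ->]|_ /=]; rewrite ?add0r ?addr0.
have [vpm vpI] := x_valid _ _ (elimN eqP x_pn0).
apply: FD; last exact: Fsingle (xQ _ _ (elimN eqP x_pn0)).
apply: IH => [m I /nz'[/x_valid]|m I /nz'[/lP[[<- <-] []|]]|m I /nz'[/xQ]] //.
Qed.

Section Generated.
Variable F : elt k -> Prop.
Hypothesis F_submodule : is_submodule s n F.
Hypothesis F_gen : forall i I, valid_tuple n I -> i \in I -> F (emulx s i (ebasis k I)).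

Lemma generated_esingle j0 I m : valid_tuple n I -> j0 \in I -> valid_mono s m ->
  (0 < m j0)%N -> F (esingle m I 1).
Proof.
have [_ [_ [_ [_ [F_mulx _]]]]] := F_submodule.
(* Induction on the total degree: divide by one variable at a time, keeping the
   exponent of x_j0 positive, until only x_j0 e_I is left. *)
move=> vI j0I [le_s [N supN]]; have [d] := ubnP (\sum_(i < N) m i).
elim: d m le_s supN => // d IH m le_s supN deg_m mj0.
have [m_unit|[j mj]] : dec j0 m = mono0 \/ exists j, (0 < dec j0 m j)%N.
  case: (classic (exists j, (0 < dec j0 m j)%N)) => [|no]; [by right|left].
  apply: functional_extensionality => j; apply/eqP; rewrite -leqn0 leqNgt.
  by apply/negP => pos; apply: no; exists j.
  by rewrite -(emulx_esingle (j := j0)) ?mj0 ?le_s // m_unit; apply: F_gen.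
have mj_pos : (0 < m j)%N := leq_trans mj (dec_le j0 m j).
have jN : (j < N)%N by rewrite ltnNge; apply/negP => /supN mj0'; rewrite mj0' in mj_pos.
rewrite -(emulx_esingle (j := j)) ?mj_pos ?le_s //; apply/F_mulx/IH.
- by move=> i; apply: leq_trans (dec_le j m i) (le_s i).
- by move=> i /supN; rewrite /dec; case: eqP => // _ ->.
- by apply: leq_trans (sum_dec_ltn jN mj_pos) _; rewrite -ltnS.
- by rewrite /dec; case: eqP => [j0j|_ //]; move: mj; rewrite /dec -j0j eqxx.
Qed.

Lemma generated_supported x : supported_in (fun m I => ~~ vanish_on m I) x -> F x.
Proof.
have [_ [F0 [FD [FZ _]]]] := F_submodule.
apply: supported_in_span => // m I c vm vI /vanish_onP nv.
have [j0 [j0I mj0]] : exists j0, j0 \in I /\ (0 < m j0)%N.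
  apply: NNPP => no; apply: nv => j jI; apply/eqP; rewrite -leqn0 leqNgt.
  by apply/negP => mj; apply: no; exists j.
by rewrite esingle_scale; apply/FZ/(generated_esingle vI j0I).
Qed.

End Generated.

Lemma inNP x : inN s n x <-> isP s n x /\ forall m I, vanish_on m I -> x m I = 0.
Proof.
have N_supported : inN s n x <-> supported_in (fun m I => ~~ vanish_on m I) x.
  split=> [|Sx F F_submodule F_gen]; last exact: (@generated_supported F F_submodule F_gen x Sx).
  apply; first apply: is_submodule_supported.
  - move=> i m I _; apply: contra => /vanish_onP v; apply/vanish_onP => j /v mj0.
    by rewrite /dec mj0; case: eqP.
  - by move=> sg m I; rewrite vanish_on_act.
  - move=> i I vI iI; split; first by apply/isP_mulx/isP_esingle => //; split=> //; exists 0%N.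
    rewrite /emulx /ebasis => m J; case: ifP => // /andP[mi _].
    case: excluded_middle_informative => //= -[_ ->] _.
    by apply/negP => /vanish_onP /(_ i iI) mi0; rewrite mi0 in mi.
rewrite N_supported; split=> -[Px xQ]; split=> // m I.
  by move=> v; apply: NNPP => /xQ; rewrite v.
by move=> nz; apply/negP => /xQ.
Qed.

Lemma inN0 : inN s n (ezero k).
Proof. by move=> F [_ []]. Qed.

End PModule.

Section Filtration.
Variable k : fieldType.
Variables s n : nat.
Implicit Types (x y : elt k) (m : mono) (I : seq nat) (sg : finperm).

Definition code_at_least c := supported_in s n (fun m I => (c <= code s m I)%N) (k := k).

Lemma code_at_least_submodule c : is_submodule s n (code_at_least c).
Proof.
apply: is_submodule_supported => [i m I _|sg m I]; last by rewrite code_act.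
by move/leq_trans; apply; apply/leq_code/dec_le.
Qed.

Lemma isP_code_ltn x m I : isP s n x -> x m I <> 0 -> (code s m I < s.+1 ^ n)%N.
Proof. by move=> [x_valid _] /x_valid[[le_s _] [<- _]]; apply: code_ltn. Qed.

Lemma code_at_least0 x : code_at_least 0 x <-> isP s n x.
Proof. by split=> [[]|Px] //; split. Qed.

Lemma code_at_least_max x : code_at_least (s.+1 ^ n) x <-> x = ezero k.
Proof.
split=> [[Px xQ]|->]; last by split=> [|m I []]; first exact: isP0.
apply: elt_ext => m I; apply: NNPP => nz.
by have := leq_ltn_trans (xQ _ _ nz) (isP_code_ltn Px nz); rewrite ltnn.
Qed.

Lemma code_at_least_leq c c' x : (c' <= c)%N -> code_at_least c x -> code_at_least c' x.
Proof. by move=> le_c [Px xQ]; split=> // m I /xQ; apply: leq_trans. Qed.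

Definition strip c x : elt k :=
  fun m I => if vanish_on m I then x (madd m (digits s c I)) I else 0.

Definition unstrip c y : elt k := fun m I =>
  if excluded_middle_informative (m = madd (zero_on m I) (digits s c I))
  then y (zero_on m I) I else 0.

Lemma isP_strip c x : isP s n x -> isP s n (strip c x).
Proof.
move=> [x_valid [l lP]]; split=> [m I|].
  by rewrite /strip; case: ifP => // _ /x_valid[/valid_mono_maddl].
exists (List.map (fun p => (zero_on p.1 p.2, p.2)) l) => m I.
rewrite /strip; case: ifP => // v /lP /(List.in_map (fun p => (zero_on p.1 p.2, p.2))).
by rewrite /= zero_on_madd_digits.
Qed.

Lemma isP_unstrip c y : isP s n y -> isP s n (unstrip c y).
Proof.
move=> [y_valid [l lP]]; split=> [m I|].
  rewrite /unstrip; case: excluded_middle_informative => // e /y_valid[vm vI].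
  by split=> //; rewrite e; apply: valid_mono_madd_digits (vanish_on_zero_on _ _) vm.
exists (List.map (fun p => (madd p.1 (digits s c p.2), p.2)) l) => m I.
rewrite /unstrip; case: excluded_middle_informative => // e /lP.
by move/(List.in_map (fun p => (madd p.1 (digits s c p.2), p.2))); rewrite /= -e.
Qed.

Lemma strip_add c x y : strip c (eadd x y) = eadd (strip c x) (strip c y).
Proof. by apply: elt_ext => m I; rewrite /strip /eadd; case: ifP; rewrite ?addr0. Qed.

Lemma strip_scale c a x : strip c (escale a x) = escale a (strip c x).
Proof. by apply: elt_ext => m I; rewrite /strip /escale; case: ifP; rewrite ?mulr0. Qed.

Lemma strip_act c sg x : strip c (eact sg x) = eact sg (strip c x).
Proof. by apply: elt_ext => m I; rewrite /strip /eact vanish_on_act digits_act. Qed.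

Section Quotient.
Variable c : nat.
Hypothesis c_lt : (c < s.+1 ^ n)%N.

Lemma code_madd_digits_tuple m I : valid_tuple n I -> vanish_on m I ->
  code s (madd m (digits s c I)) I = c.
Proof. by move=> [size_I uI]; apply: code_madd_digits; rewrite ?size_I. Qed.

Lemma strip_mulx j x : code_at_least c x ->
  inN s n (esub (strip c (emulx s j x)) (emulx s j (strip c x))).
Proof.
move=> [Px xQ]; apply/inNP; split.
  by apply: isP_sub; [apply/isP_strip/isP_mulx | apply/isP_mulx/isP_strip].
move=> m I v; rewrite /esub /strip v /emulx -/(dec j m) -/(dec j (madd m (digits s c I))).
have [jI|jI] := boolP (j \in I).
  (* x_j lowers the code below c, and x is supported on codes >= c. *)
  have -> : m j = 0%N by move/vanish_onP: v; apply.
  rewrite /= subr0; case: ifP => // /andP[mj _]; apply: NNPP => nz.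
  have [_ vI] := proj1 Px _ _ nz.
  have := leq_ltn_trans (xQ _ _ nz) (code_dec_ltn s jI mj).
  by rewrite code_madd_digits_tuple // ltnn.
have -> : madd m (digits s c I) j = m j by rewrite /madd digits_notin ?addn0.
case: ifP => [/andP[mj _]|_]; last by rewrite subrr.
have -> : vanish_on (dec j m) I.
  apply/vanish_onP => t tI; rewrite /dec; case: eqP => [tj|_]; first by rewrite -tj tI in jI.
  by move/vanish_onP: v; apply.
by rewrite madd_dec // subrr.
Qed.

Lemma strip_ker x : code_at_least c x -> inN s n (strip c x) <-> code_at_least c.+1 x.
Proof.
move=> [Px xQ]; rewrite inNP; split=> [[_ strip0]|[_ xQ']].
  split=> // m I nz; rewrite ltn_neqAle xQ // andbT; apply/eqP => code_c.
  have [[le_s _] [_ uI]] := proj1 Px _ _ nz.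
  have := strip0 _ _ (vanish_on_zero_on m I).
  by rewrite /strip vanish_on_zero_on code_c madd_zero_on_digits.
split; first exact: isP_strip.
move=> m I v; rewrite /strip v; apply: NNPP => nz; have [_ vI] := proj1 Px _ _ nz.
by have := xQ' _ _ nz; rewrite code_madd_digits_tuple // ltnn.
Qed.

Lemma strip_surj y : isP s n y ->
  exists x, code_at_least c x /\ inN s n (esub (strip c x) y).
Proof.
move=> Py; have Px := isP_unstrip c Py; exists (unstrip c y); split.
  split=> // m I nz; have [_ vI] := proj1 Px _ _ nz; move: nz.
  rewrite /unstrip; case: excluded_middle_informative => // e _; rewrite e.
  by rewrite code_madd_digits_tuple // vanish_on_zero_on.
apply/inNP; split; first by apply: isP_sub => //; apply: isP_strip.
move=> m I v; rewrite /esub /strip v /unstrip zero_on_madd_digits //.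
by case: excluded_middle_informative => /= [_|no]; [rewrite subrr | exfalso; apply: no].
Qed.

Lemma quot_iso_code_at_least : quot_iso_Q s n (code_at_least c) (code_at_least c.+1).
Proof.
exists (strip c); split; first by move=> x [Px _]; apply: isP_strip.
split; first by move=> x y _ _; rewrite strip_add esubrr; apply: inN0.
split; first by move=> a x _; rewrite strip_scale esubrr; apply: inN0.
split; first by move=> j x; apply: strip_mulx.
split; first by move=> sg x _; rewrite strip_act esubrr; apply: inN0.
split; first by move=> x; apply: strip_ker.
exact: strip_surj.
Qed.

End Quotient.

End Filtration.

Theorem proposition4p9 (k : fieldType) (s n : nat) :
  exists F : nat -> (elt k -> Prop),
    (forall i, is_submodule s n (F i)) /\
    (forall x, F 0%N x <-> x = ezero k) /\
    (forall x, F ((s.+1) ^ n)%N x <-> isP s n x) /\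
    (forall i x, (i < (s.+1) ^ n)%N -> F i x -> F i.+1 x) /\
    (forall i, (1 <= i <= (s.+1) ^ n)%N -> quot_iso_Q s n (F i) (F i.-1)).
Proof.
exists (fun i => @code_at_least k s n (s.+1 ^ n - i)).
split; first by move=> i; apply: code_at_least_submodule.
split; first by move=> x; rewrite subn0; apply: code_at_least_max.
split; first by move=> x; rewrite subnn; apply: code_at_least0.
split; first by move=> i x _; apply/code_at_least_leq/leq_sub2l.
case=> // i /andP[_ i_lt]; rewrite /= -[(s.+1 ^ n - i)%N](subnSK i_lt).
by apply: quot_iso_code_at_least; rewrite ltn_subrL expn_gt0.
Qed.
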